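(* Let $p=11$ and let $0\le i\le 9$ with $i\ne5$. Then $F_i(\mathbb{Z}_{11})=(F(i)\bmod 11)+11\mathbb{Z}_{11}$, where $$F_i(x)=\sum_{m\ge0}\frac{\left(\omega(\phi)^i-(-1)^m\omega(\bar\phi)^i\right)\left(\log_{11}\frac{\phi}{\omega(\phi)}\right)^m}{m!\,\sqrt5}\,x^m\quad(x\in\mathbb{Z}_{11}).$$
   Context: $F(n)$ is the Fibonacci sequence ($F(0)=0,F(1)=1,F(n+2)=F(n+1)+F(n)$). Since $11\equiv1\pmod5$, the polynomial $x^2-x-1$ has two roots $\phi,\bar\phi\in\mathbb{Z}_{11}$; $\sqrt5:=2\phi-1$. For $x\in\mathbb{Z}_{11}\setminus11\mathbb{Z}_{11}$, $\omega(x)$ is the unique $10$th root of unity in $\mathbb{Z}_{11}$ congruent to $x$ modulo $11$. $\log_{11}y=\sum_{m\ge1}(-1)^{m+1}(y-1)^m/m$ is the $11$-adic logarithm. $F(i)\bmod 11$ denotes the least nonnegative residue. *)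

(* The 11-adic numbers are built honestly as the completion of
   Q for the 11-adic absolute value: an element of Q_11 is represented by an
   11-adically Cauchy sequence of rationals, with equality up to null sequences. *)
From mathcomp Require Import all_boot all_order all_algebra.
From Stdlib Require Import ClassicalEpsilon.
Set Implicit Arguments. Unset Strict Implicit. Unset Printing Implicit Defensive.
Import Order.TTheory GRing.Theory Num.Theory.
Local Open Scope ring_scope.

Definition padic := nat -> rat.

Definition vp (q : rat) : int :=
  (logn 11 (absz (numq q)))%:Z - (logn 11 (absz (denq q)))%:Z.

Definition small (k : nat) (q : rat) : bool := (q == 0) || (k%:Z <= vp q).

Definition is_cauchy (x : padic) : Prop :=
  forall k : nat, exists N : nat, forall n m : nat, (N <= n)%N -> (N <= m)%N ->
    small k (x n - x m).

(* pdvd k x <-> the 11-adic number x lies in 11^k Z_11 *)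
Definition pdvd (k : nat) (x : padic) : Prop :=
  exists N : nat, forall n : nat, (N <= n)%N -> small k (x n).

Definition peq (x y : padic) : Prop := forall k : nat, pdvd k (fun n => x n - y n).

Definition inZ11 (x : padic) : Prop := is_cauchy x /\ pdvd 0 x.

Definition pconst (q : rat) : padic := fun _ => q.

Definition pconv (u : nat -> padic) (y : padic) : Prop :=
  forall k : nat, exists M : nat, forall m : nat, (M <= m)%N ->
    pdvd k (fun n => u m n - y n).

(* the 11-adic limit (a chosen representative, when it exists) *)
Definition plim (u : nat -> padic) : padic :=
  epsilon (inhabits (pconst 0)) (fun y => is_cauchy y /\ pconv u y).

Definition omega11 (x : padic) : padic :=
  epsilon (inhabits (pconst 0)) (fun w => is_cauchy w /\
    peq (fun n => w n ^+ 10) (pconst 1) /\ pdvd 1 (fun n => w n - x n)).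

Definition log11 (y : padic) : padic :=
  plim (fun M n => \sum_(1 <= m < M.+1) (-1) ^+ m.+1 * (y n - 1) ^+ m / m%:R).

Fixpoint fib (n : nat) : nat :=
  match n with
  | 0 => 0
  | 1 => 1
  | (k.+1 as n1).+1 => fib n1 + fib k
  end.

(* m-th term of F_i(x); phib = 1 - phi is the other root, sqrt5 = 2 phi - 1 *)
Definition Fi_term (i m : nat) (phi x : padic) : padic :=
  let w := omega11 phi in
  let wb := omega11 (fun n => 1 - phi n) in
  let L := log11 (fun n => phi n / w n) in
  fun n => (w n ^+ i - (-1) ^+ m * wb n ^+ i) * L n ^+ m
           / ((m`!)%:R * (2 * phi n - 1)) * x n ^+ m.

Definition Fi_partial (i : nat) (phi x : padic) (M : nat) : padic :=
  fun n => \sum_(m < M) Fi_term i m phi x n.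

Definition Fi (i : nat) (phi x : padic) : padic := plim (Fi_partial i phi x).

(* F_i is the 11-adic interpolation of Binet's formula along n = i (mod 10): with
   w = omega(phi) and u = phi / w = 1 (mod 11), phi^n = w^i exp(n log u).  Since
   v_11(log u) = 1, the m-th coefficient c_m of F_i has valuation at least
   m - v_11(m!), so the series converges on Z_11, c_0 = F(i) (mod 11), and
   F_i(x) - F_i(x') = c_1 (x - x') modulo 11^2 (x - x').  Moreover
   c_1 = (w^i + omega(1 - phi)^i) log u / sqrt5 has valuation exactly 1, because
   w^i + omega(1 - phi)^i = L(i) (mod 11) and, for 0 <= i <= 9, the Lucas number
   L(i) is prime to 11 unless i = 5.  Hence F_i maps Z_11 into F(i) + 11 Z_11, and
   Newton's iteration x := x + (y - F_i(x)) / c_1 converges to a preimage of any y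
   in F(i) + 11 Z_11. *)

From mathcomp Require Import all_boot all_order all_algebra.
From mathcomp Require Import ring zify.
From Stdlib Require Import ClassicalEpsilon.
Import Order.TTheory GRing.Theory Num.Theory.
Local Open Scope ring_scope.
Set Implicit Arguments. Unset Strict Implicit.

(** * The 11-adic valuation on Q *)

Lemma vp_intr_div (a b : int) : a != 0 -> b != 0 ->
  vp (a%:~R / b%:~R) = (logn 11 `|a|)%:Z - (logn 11 `|b|)%:Z.
Proof.
move=> a0 b0; set q : rat := _ / _.
have q0 : q != 0 by rewrite /q mulf_neq0 ?invr_eq0 ?intr_eq0.
have E : numq q * b = a * denq q.
  apply: (@intr_inj rat); rewrite !rmorphM /= numqE /q.
  by field; rewrite intr_eq0.
have E2 : (`|numq q| * `|b| = `|a| * `|denq q|)%N by rewrite -!abszM E.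
have n0 : (0 < `|numq q|)%N by rewrite absz_gt0 numq_eq0.
have d0 : (0 < `|denq q|)%N by rewrite absz_gt0 denq_neq0.
have a0' : (0 < `|a|)%N by rewrite absz_gt0.
have b0' : (0 < `|b|)%N by rewrite absz_gt0.
have := congr1 (logn 11) E2; rewrite !lognM // /vp; lia.
Qed.

Lemma vpM (a b : rat) : a != 0 -> b != 0 -> vp (a * b) = vp a + vp b.
Proof.
move=> a0 b0; have na : numq a != 0 by rewrite numq_eq0.
have nb : numq b != 0 by rewrite numq_eq0.
have -> : a * b = (numq a * numq b)%:~R / (denq a * denq b)%:~R.
  rewrite -{1}(divq_num_den a) -{1}(divq_num_den b) !rmorphM /=; field.
  by rewrite !intr_eq0 !denq_neq0.
rewrite vp_intr_div ?mulf_neq0 ?denq_neq0 // /vp.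
rewrite !abszM !lognM ?absz_gt0 ?denq_neq0 //; lia.
Qed.

Lemma vpV (a : rat) : vp a^-1 = - vp a.
Proof.
have [->|a0] := eqVneq a 0; first by rewrite invr0.
rewrite -{1}(divq_num_den a) invf_div vp_intr_div ?denq_neq0 ?numq_eq0 //.
by rewrite /vp; lia.
Qed.

Lemma vp_natr (n : nat) : vp n%:R = (logn 11 n)%:Z.
Proof.
case: n => [//|n]; have -> : (n.+1%:R : rat) = (Posz n.+1)%:~R / (Posz 1)%:~R.
  by rewrite divr1.
by rewrite vp_intr_div //= logn1 subr0.
Qed.

Lemma vpN (a : rat) : vp (- a) = vp a.
Proof.
have [->|a0] := eqVneq a 0; first by rewrite oppr0.
rewrite -mulN1r vpM ?oppr_eq0 ?oner_eq0 //.
have -> : - 1 = (Negz 0)%:~R / (Posz 1)%:~R :> rat by rewrite divr1.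
by rewrite vp_intr_div //= add0r.
Qed.

Lemma logn_addz (a b : int) : a + b != 0 ->
  (minn (logn 11 (absz a)) (logn 11 (absz b)) <= logn 11 (absz (a + b)%R))%N.
Proof.
move=> ab0; set k := minn _ _.
have dvd_k (c : int) : (k <= logn 11 (absz c))%N -> ((11 ^ k)%:Z %| c)%Z.
  move=> kc; rewrite dvdzE /=.
  by apply: dvdn_trans (pfactor_dvdnn 11 _); rewrite dvdn_exp2l.
have : ((11 ^ k)%:Z %| a + b)%Z by apply: rpredD; apply: dvd_k; rewrite ?geq_minl ?geq_minr.
by rewrite dvdzE /= -pfactor_dvdn // absz_gt0.
Qed.

Lemma vpD_ge (a b : rat) (k : int) : a != 0 -> b != 0 -> a + b != 0 ->
  k <= vp a -> k <= vp b -> k <= vp (a + b).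
Proof.
move=> a0 b0 ab0; set D := denq a * denq b.
set A := numq a * denq b; set B := numq b * denq a.
have D0 : D != 0 by rewrite mulf_neq0 ?denq_neq0.
have A0 : A != 0 by rewrite mulf_neq0 ?numq_eq0 ?denq_neq0.
have B0 : B != 0 by rewrite mulf_neq0 ?numq_eq0 ?denq_neq0.
have Ea : a = A%:~R / D%:~R.
  rewrite -{1}(divq_num_den a) /A /D !rmorphM /=; field.
  by rewrite !intr_eq0 !denq_neq0.
have Eb : b = B%:~R / D%:~R.
  rewrite -{1}(divq_num_den b) /B /D !rmorphM /=; field.
  by rewrite !intr_eq0 !denq_neq0.
have Eab : a + b = (A + B)%:~R / D%:~R by rewrite Ea Eb rmorphD /= mulrDl.
have AB0 : A + B != 0 by apply: contra ab0; rewrite Eab => /eqP ->; rewrite mul0r.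
rewrite Eab Ea Eb !vp_intr_div //; have := logn_addz AB0.
move: (logn 11 _) (logn 11 (absz A)) (logn 11 (absz B)) (logn 11 (absz D)); lia.
Qed.

(* [vge k q]: q lies in 11^k Z_(11); unlike [small], k may be negative. *)
Definition vge (k : int) (q : rat) := (q == 0) || (k <= vp q).

Lemma vge0 k : vge k 0. Proof. by rewrite /vge eqxx. Qed.

Lemma vge_vp a : vge (vp a) a. Proof. by rewrite /vge lexx orbT. Qed.

Lemma vgeW l k a : l <= k -> vge k a -> vge l a.
Proof. by move=> lk /orP[/eqP->|h]; rewrite ?vge0 // /vge (le_trans lk h) orbT. Qed.

Lemma vgeN k a : vge k (- a) = vge k a.
Proof. by rewrite /vge oppr_eq0 vpN. Qed.

Lemma vgeD k a b : vge k a -> vge k b -> vge k (a + b).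
Proof.
have [->|a0] := eqVneq a 0; first by rewrite add0r.
have [->|b0] := eqVneq b 0; first by rewrite addr0.
have [->|ab0] := eqVneq (a + b) 0; first by rewrite vge0.
by rewrite /vge (negbTE a0) (negbTE b0) (negbTE ab0) /=; apply: vpD_ge.
Qed.

Lemma vgeB k a b : vge k a -> vge k b -> vge k (a - b).
Proof. by move=> ha hb; apply: vgeD; rewrite ?vgeN. Qed.

Lemma vgeM k l a b : vge k a -> vge l b -> vge (k + l) (a * b).
Proof.
have [->|a0] := eqVneq a 0; first by rewrite mul0r vge0.
have [->|b0] := eqVneq b 0; first by rewrite mulr0 vge0.
rewrite /vge (negbTE a0) (negbTE b0) mulf_eq0 (negbTE a0) (negbTE b0) /= vpM //.
exact: lerD.
Qed.

Lemma vgeV a : vge (- vp a) a^-1.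
Proof. by rewrite -vpV vge_vp. Qed.

Lemma vge_divr k a b : vge k (a * b) -> b != 0 -> vge (k - vp b) a.
Proof. by move=> h b0; rewrite -(mulfK b0 a); apply: vgeM h (vgeV b). Qed.

Lemma vgeX k a m : vge k a -> vge (k * m%:Z) (a ^+ m).
Proof.
move=> h; elim: m => [|m IH]; first by rewrite mulr0 expr0 /vge -[1]/(1%:R) vp_natr logn1.
by rewrite exprS -addn1 PoszD mulrDr mulr1 addrC; apply: vgeM.
Qed.

Lemma vge_sum (I : Type) (r : seq I) (P : pred I) (F : I -> rat) k :
  (forall i, P i -> vge k (F i)) -> vge k (\sum_(i <- r | P i) F i).
Proof. by move=> h; elim/big_rec: _ => [|i x Pi]; [exact: vge0|exact: vgeD (h i Pi)]. Qed.

Lemma vge_chain k a b c d : vge k (a - b) -> vge k (b - c) -> vge k (c - d) ->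
  vge k (a - d).
Proof.
move=> h1 h2 h3; have -> : a - d = (a - b) + (b - c) + (c - d) by ring.
by do 2![apply: vgeD => //].
Qed.

Lemma vp_eq_vge k a : vge k a -> ~~ vge (k + 1) a -> a != 0 /\ vp a = k.
Proof.
rewrite /vge; have [->//|a0] := eqVneq a 0 => /= h1 h2; split=> //; lia.
Qed.

Lemma vp_congr e k a b : e < k -> vge k (a - b) -> b != 0 -> vp b = e ->
  a != 0 /\ vp a = e.
Proof.
move=> ek hab b0 vb; have ek1 : e + 1 <= k by rewrite lezD1.
have nb : ~~ vge (e + 1) b by rewrite /vge (negbTE b0) vb -ltNge ltrDl.
apply: vp_eq_vge.
  rewrite -(subrK b a); apply: vgeD; last by rewrite -vb vge_vp.
  by apply: vgeW hab; apply: le_trans ek1; rewrite lerDl.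
apply: contra nb => ha; have -> : b = a - (a - b) by ring.
exact: vgeB ha (vgeW ek1 hab).
Qed.

Definition eventually (P : nat -> Prop) := exists N, forall n, (N <= n)%N -> P n.

Lemma eventually_and P Q : eventually P -> eventually Q ->
  eventually (fun n => P n /\ Q n).
Proof.
move=> [N1 h1] [N2 h2]; exists (maxn N1 N2) => n hn.
by split; [apply: h1|apply: h2]; lia.
Qed.

Lemma eventually_mono (P Q : nat -> Prop) :
  (forall n, P n -> Q n) -> eventually P -> eventually Q.
Proof. by move=> h [N hN]; exists N => n /hN /h. Qed.

Lemma eventuallyT (P : nat -> Prop) : (forall n, P n) -> eventually P.
Proof. by move=> h; exists 0%N. Qed.

Lemma nat_choice (P : nat -> nat -> Prop) :
  (forall n, exists m, P n m) -> exists f : nat -> nat, forall n, P n (f n).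
Proof.
move=> h; exists (fun n => proj1_sig (constructive_indefinite_description _ (h n))).
by move=> n; case: constructive_indefinite_description.
Qed.

Definition pdvdz (k : int) (x : padic) := eventually (fun n => vge k (x n)).

Definition cauchyz (x : padic) := forall k : int, exists N, forall n m,
  (N <= n)%N -> (N <= m)%N -> vge k (x n - x m).

Lemma pdvdzW l k x : l <= k -> pdvdz k x -> pdvdz l x.
Proof. by move=> lk; apply: eventually_mono => n; apply: vgeW. Qed.

Lemma pdvdz_leq x (j k : nat) : (j <= k)%N -> pdvdz k%:Z x -> pdvdz j%:Z x.
Proof. by rewrite -lez_nat; apply: pdvdzW. Qed.

Lemma pdvdz_eq k x y : eventually (fun n => x n = y n) -> pdvdz k x -> pdvdz k y.
Proof. by move=> e hx; apply: eventually_mono (eventually_and e hx) => n [->]. Qed.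

Lemma pdvdzD k x y : pdvdz k x -> pdvdz k y -> pdvdz k (fun n => x n + y n).
Proof. by move=> hx hy; apply: eventually_mono (eventually_and hx hy) => n []; apply: vgeD. Qed.

Lemma pdvdzN k x : pdvdz k x -> pdvdz k (fun n => - x n).
Proof. by apply: eventually_mono => n; rewrite vgeN. Qed.

Lemma pdvdzB k x y : pdvdz k x -> pdvdz k y -> pdvdz k (fun n => x n - y n).
Proof. by move=> hx /pdvdzN; apply: pdvdzD. Qed.

Lemma pdvdzM k l x y : pdvdz k x -> pdvdz l y -> pdvdz (k + l) (fun n => x n * y n).
Proof. by move=> hx hy; apply: eventually_mono (eventually_and hx hy) => n []; apply: vgeM. Qed.

Lemma peq0_pdvdz x (k : nat) : peq x (pconst 0) -> pdvdz k x.
Proof. by move/(_ k); apply: pdvdz_eq; apply: eventuallyT => n; rewrite subr0. Qed.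

Lemma is_cauchyE x : is_cauchy x <-> cauchyz x.
Proof.
split=> h k; last exact: h.
have [N hN] := h `|k|%N; exists N => n m hn hm.
by apply: vgeW (hN n m hn hm); lia.
Qed.

Lemma cauchyz_eventually x k : cauchyz x ->
  eventually (fun N => forall n m, (N <= n)%N -> (N <= m)%N -> vge k (x n - x m)).
Proof.
move=> /(_ k) [N hN]; exists N => N' hN' n m hn hm.
by apply: hN; apply: leq_trans hN' _.
Qed.

Lemma cauchyz_eq x y : eventually (fun n => x n = y n) -> cauchyz x -> cauchyz y.
Proof.
move=> [N0 e] hx k; have [N h] := hx k; exists (maxn N0 N) => n m hn hm.
by rewrite -!e; [apply: h|..]; lia.
Qed.

Lemma cauchyz_const q : cauchyz (pconst q).
Proof. by move=> k; exists 0%N => n m _ _; rewrite subrr vge0. Qed.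

Lemma cauchyzD x y : cauchyz x -> cauchyz y -> cauchyz (fun n => x n + y n).
Proof.
move=> hx hy k; have [N1 h1] := hx k; have [N2 h2] := hy k.
exists (maxn N1 N2) => n m hn hm.
have -> : x n + y n - (x m + y m) = (x n - x m) + (y n - y m) by ring.
by apply: vgeD; [apply: h1|apply: h2]; lia.
Qed.

Lemma cauchyzN x : cauchyz x -> cauchyz (fun n => - x n).
Proof.
move=> hx k; have [N h] := hx k; exists N => n m hn hm.
by rewrite -opprD vgeN; apply: h.
Qed.

Lemma cauchyzB x y : cauchyz x -> cauchyz y -> cauchyz (fun n => x n - y n).
Proof. by move=> hx /cauchyzN; apply: cauchyzD. Qed.

Lemma cauchyz_bounded x : cauchyz x -> exists B, pdvdz B x.
Proof.
move=> /(_ 0) [N h]; exists (Num.min 0 (vp (x N))); exists N => n hn.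
rewrite -(subrK (x N) (x n)); apply: vgeD.
  by apply: vgeW (h n N hn (leqnn _)); rewrite ge_min lexx.
by apply: vgeW (vge_vp _); rewrite ge_min lexx orbT.
Qed.

Lemma cauchyzM x y : cauchyz x -> cauchyz y -> cauchyz (fun n => x n * y n).
Proof.
move=> hx hy k; have [Bx [Nx bx]] := cauchyz_bounded hx.
have [By [Ny bY]] := cauchyz_bounded hy.
have [N1 h1] := hx (k - By); have [N2 h2] := hy (k - Bx).
exists (maxn (maxn Nx Ny) (maxn N1 N2)) => n m hn hm.
have -> : x n * y n - x m * y m = x n * (y n - y m) + (x n - x m) * y m by ring.
apply: vgeD.
  by rewrite -(subrKC Bx k); apply: vgeM; [apply: bx|apply: h2]; lia.
by rewrite -(subrK By k); apply: vgeM; [apply: h1|apply: bY]; lia.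
Qed.

Lemma cauchyzX x m : cauchyz x -> cauchyz (fun n => x n ^+ m).
Proof.
move=> hx; elim: m => [|m IH].
  by apply: cauchyz_eq (cauchyz_const 1); apply: eventuallyT => n; rewrite expr0.
apply: cauchyz_eq (cauchyzM hx IH); apply: eventuallyT => n; by rewrite exprS.
Qed.

Lemma cauchyzV x e : cauchyz x -> eventually (fun n => x n != 0 /\ vp (x n) = e) ->
  cauchyz (fun n => (x n)^-1).
Proof.
move=> hx [N0 h0] k; have [N1 h1] := hx (k + e + e).
exists (maxn N0 N1) => n m hn hm.
have [xn0 vxn] := h0 n (leq_trans (leq_maxl _ _) hn).
have [xm0 vxm] := h0 m (leq_trans (leq_maxl _ _) hm).
have -> : (x n)^-1 - (x m)^-1 = (x m - x n) * (x n)^-1 * (x m)^-1.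
  by field; rewrite xn0 xm0.
have -> : k = k + e + e + - vp (x n) + - vp (x m) by rewrite vxn vxm; ring.
apply: vgeM (vgeV _); apply: vgeM (vgeV _).
by rewrite -vgeN opprB; apply: h1; lia.
Qed.

Lemma cauchyz_sum (t : nat -> padic) M : (forall m, cauchyz (t m)) ->
  cauchyz (fun n => \sum_(m < M) t m n).
Proof.
move=> ht; elim: M => [|M IH].
  by apply: cauchyz_eq (cauchyz_const 0); apply: eventuallyT => n; rewrite big_ord0.
apply: cauchyz_eq (cauchyzD IH (ht M)).
by apply: eventuallyT => n; rewrite big_ord_recr.
Qed.

Lemma inZ11_cauchyz x : inZ11 x -> cauchyz x.
Proof. by case=> /is_cauchyE. Qed.

Lemma inZ11_pdvdz x : inZ11 x -> pdvdz 0 x.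
Proof. by case. Qed.

Lemma inZ11_const0 : inZ11 (pconst 0).
Proof.
split; first by apply/is_cauchyE; exact: cauchyz_const.
exact: eventuallyT (fun _ => vge0 0).
Qed.

(** * Completeness *)

Lemma monotone_modulus (P : nat -> nat -> Prop) :
  (forall k, exists M, P k M) ->
  (forall k M M', (M <= M')%N -> P k M -> P k M') ->
  exists f : nat -> nat, {homo f : a b / (a <= b)%N} /\
    forall j k, (j <= k)%N -> P j (f k).
Proof.
move=> hP Pmono; have [g hg] := nat_choice hP.
exists (fun k => \max_(j < k.+1) g j)%N; split.
  move=> a b ab; apply/bigmax_leqP => j _.
  exact: (leq_bigmax (widen_ord (ab : a < b.+1)%N j)).
by move=> j k jk; apply: Pmono (hg j); apply: (leq_bigmax (Ordinal (jk : j < k.+1)%N)).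
Qed.

Section Completeness.

Variable u : nat -> padic.
Hypothesis u_cauchy : forall m, cauchyz (u m).
Variables f N : nat -> nat.
Hypothesis f_homo : {homo f : a b / (a <= b)%N}.
Hypothesis f_modulus : forall j k, (j <= k)%N -> forall m m', (f k <= m)%N -> (f k <= m')%N ->
  pdvdz j%:Z (fun n => u m n - u m' n).
Hypothesis N_modulus : forall k a b, (N k <= a)%N -> (N k <= b)%N ->
  vge k%:Z (u (f k) a - u (f k) b).

Let diag k := u (f k) (N k).

Lemma diag_congr k k' : (k <= k')%N -> vge k%:Z (diag k - diag k').
Proof.
move=> kk'; have [T hT] := f_modulus (leqnn k) (leqnn (f k)) (f_homo kk').
pose r := maxn T (maxn (N k) (N k')).
apply: (@vge_chain _ _ (u (f k) r) (u (f k') r)).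
- by apply: N_modulus; lia.
- by apply: hT; lia.
- by apply: vgeW (N_modulus _ _); rewrite ?lez_nat //; lia.
Qed.

Lemma diag_cauchy : cauchyz diag.
Proof.
move=> k; exists `|k|%N => n m hn hm.
have [nm|mn] := leqP n m; first by apply: vgeW (diag_congr nm); lia.
by rewrite -vgeN opprB; apply: vgeW (diag_congr (ltnW mn)); lia.
Qed.

Lemma diag_pconv : pconv u diag.
Proof.
move=> k; exists (f k) => m hm; have [C hC] := u_cauchy m k%:Z.
exists (maxn k C) => n hn; have kn : (k <= n)%N by lia.
have [T hT] := f_modulus (leqnn k) hm (f_homo kn).
pose r := maxn T (maxn C (N n)).
apply: (@vge_chain _ _ (u m r) (u (f n) r)).
- by apply: hC; lia.
- by apply: hT; lia.
- by apply: vgeW (N_modulus _ _); rewrite ?lez_nat //; lia.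
Qed.

End Completeness.

Lemma cauchy_pconv (u : nat -> padic) :
  (forall m, cauchyz (u m)) ->
  (forall k : nat, exists M, forall m m', (M <= m)%N -> (M <= m')%N ->
      pdvdz k%:Z (fun n => u m n - u m' n)) ->
  exists y, cauchyz y /\ pconv u y.
Proof.
move=> hc hu.
have [f [f_homo f_mod]] := monotone_modulus hu (fun k M M' MM' h m m' hm hm' =>
  h m m' (leq_trans MM' hm) (leq_trans MM' hm')).
have [N hN] := nat_choice (fun k => hc (f k) k%:Z).
exists (fun k => u (f k) (N k)); split; first exact: diag_cauchy f_homo f_mod hN.
by apply: diag_pconv.
Qed.

Lemma pconv_pdvdz u y (k : nat) z : pconv u y ->
  (exists M, forall m, (M <= m)%N -> pdvdz k%:Z (fun n => u m n - z n)) ->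
  pdvdz k%:Z (fun n => y n - z n).
Proof.
move=> /(_ k) [M hM] [M' hM'].
have := pdvdzB (hM' (maxn M M') (leq_maxr _ _)) (hM (maxn M M') (leq_maxl _ _)).
by apply: pdvdz_eq; apply: eventuallyT => n /=; ring.
Qed.

Lemma pconv_eq u v y : (forall M n, u M n = v M n) -> pconv u y -> pconv v y.
Proof.
move=> e h k; have [M hM] := h k; exists M => m /hM.
by apply: pdvdz_eq; apply: eventuallyT => n; rewrite e.
Qed.

Lemma pconvS u y : pconv u y -> pconv (fun M => u M.+1) y.
Proof. by move=> h k; have [M hM] := h k; exists M => m hm; apply: hM; apply: leqW. Qed.

Lemma pconvB u v y z : pconv u y -> pconv v z ->
  pconv (fun M n => u M n - v M n) (fun n => y n - z n).
Proof.
move=> hu hv k; have [M1 h1] := hu k; have [M2 h2] := hv k.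
exists (maxn M1 M2) => m hm.
have := pdvdzB (h1 m (leq_trans (leq_maxl _ _) hm)) (h2 m (leq_trans (leq_maxr _ _) hm)).
by apply: pdvdz_eq; apply: eventuallyT => n /=; ring.
Qed.

Lemma plim_spec u : (exists y, cauchyz y /\ pconv u y) ->
  cauchyz (plim u) /\ pconv u (plim u).
Proof.
move=> [y [hy hc]]; have hy' : is_cauchy y by apply/is_cauchyE.
have [] := epsilon_spec (inhabits (pconst 0)) (fun y => is_cauchy y /\ pconv u y)
  (ex_intro _ y (conj hy' hc)).
by rewrite is_cauchyE.
Qed.

Lemma series_pconv (t : nat -> padic) (g : nat -> int) :
  (forall m, cauchyz (t m)) ->
  eventually (fun n => forall m, vge (g m) (t m n)) ->
  (forall k : int, exists M, forall m, (M <= m)%N -> k <= g m) ->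
  exists y, cauchyz y /\ pconv (fun M n => \sum_(m < M) t m n) y.
Proof.
move=> hc [N0 hb] hg; apply: cauchy_pconv => [M|k]; first exact: cauchyz_sum.
have [M hM] := hg k%:Z; exists M => m m' hm hm'; exists N0 => n hn.
have tail a b : (M <= a)%N -> (a <= b)%N ->
    vge k%:Z (\sum_(j < b) t j n - \sum_(j < a) t j n).
  move=> ha ab; rewrite -!(big_mkord xpredT (fun j => t j n)) (big_cat_nat (leq0n a) ab) /=.
  rewrite addrAC subrr add0r big_nat_cond; apply: vge_sum => j /andP[/andP[aj _] _].
  by apply: vgeW (hb n hn j); apply: hM; apply: leq_trans ha _.
have [mm'|m'm] := leqP m m'; first by rewrite -vgeN opprB; apply: tail.
exact: tail (ltnW m'm).
Qed.

(** * Teichmueller representatives *)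

Notation int11 := (vge 0).

Lemma int11_natr n : int11 n%:R.
Proof. by rewrite /vge vp_natr lez_nat leq0n orbT. Qed.

Lemma int11X a m : int11 a -> int11 (a ^+ m).
Proof. by move=> /(vgeX m); rewrite mul0r. Qed.

Lemma int11M a b : int11 a -> int11 b -> int11 (a * b).
Proof. by move=> /vgeM h /h; rewrite addr0. Qed.

Ltac solve_int11 := repeat match goal with
  | |- is_true (int11 (_ + _)) => apply: vgeD
  | |- is_true (int11 (_ - _)) => apply: vgeB
  | |- is_true (int11 (- _)) => rewrite vgeN
  | |- is_true (int11 (_ * _)) => apply: int11M
  | |- is_true (int11 (_ ^+ _)) => apply: int11X
  | |- is_true (int11 1) => exact: int11_natr 1
  | |- is_true (int11 0) => exact: vge0
  | |- is_true (int11 (_ %:R)) => exact: int11_natr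
  | H : is_true (int11 ?x) |- is_true (int11 ?x) => exact H
  end.

Lemma vgeMl k a b : int11 a -> vge k b -> vge k (a * b).
Proof. by move=> ha /(vgeM ha); rewrite add0r. Qed.

Lemma vgeMr k a b : vge k a -> int11 b -> vge k (a * b).
Proof. by move=> ha /(vgeM ha); rewrite addr0. Qed.

Lemma vp11 : vp 11 = 1.
Proof. by rewrite -[11]/(11%:R) vp_natr (pfactorK 1). Qed.

Lemma vge_mul11 a : int11 a -> vge 1 (11 * a).
Proof. by rewrite -vp11; apply: vgeMr (vge_vp 11). Qed.

Lemma vge_subXX k a b m : int11 a -> int11 b -> vge k (a - b) ->
  vge k (a ^+ m - b ^+ m).
Proof.
move=> ha hb hab; rewrite subrXX; apply: vgeMr => //.
by apply: vge_sum => j _; solve_int11.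
Qed.

Lemma vge_subX11 k a b : 1 <= k -> int11 a -> int11 b -> vge k (a - b) ->
  vge (k + 1) (a ^+ 11 - b ^+ 11).
Proof.
move=> k1 ha hb hab; rewrite subrXX; apply: vgeM => //.
(* each term of the second factor is b^10 modulo (a - b), and there are 11 of them *)
have -> : \sum_(j < 11) a ^+ (11.-1 - j) * b ^+ j =
    \sum_(j < 11) (a ^+ (10 - j) - b ^+ (10 - j)) * b ^+ j + b ^+ 10 *+ 11.
  rewrite -[in _ *+ 11](card_ord 11) -sumr_const -big_split.
  apply: eq_bigr => j _ /=; have hj : (10 - j + j = 10)%N by have := ltn_ord j; lia.
  have -> : b ^+ 10 = b ^+ (10 - j) * b ^+ j by rewrite -exprD hj.
  by ring.
apply: vgeD; last by rewrite -mulr_natl; apply: vge_mul11; solve_int11.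
apply: vge_sum => j _; apply: vgeMr; last by solve_int11.
by apply: vge_subXX => //; apply: vgeW hab.
Qed.

Lemma vge_subX11n k a b j : 1 <= k -> int11 a -> int11 b -> vge k (a - b) ->
  vge (k + j%:Z) (a ^+ (11 ^ j) - b ^+ (11 ^ j)).
Proof.
move=> k1 ha hb hab; elim: j => [|j IH]; first by rewrite addr0 !expr1.
rewrite expnSr !exprM -addn1 PoszD addrA.
apply: vge_subX11 => //; first by apply: le_trans k1 _; rewrite lerDl.
all: by solve_int11.
Qed.

Lemma fermat11n b j : int11 b -> vge 1 (b ^+ 11 - b) -> vge 1 (b ^+ (11 ^ j) - b).
Proof.
move=> hb hf; elim: j => [|j IH]; first by rewrite expr1 subrr vge0.
have -> : b ^+ (11 ^ j.+1) - b = ((b ^+ (11 ^ j)) ^+ 11 - b ^+ 11) + (b ^+ 11 - b).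
  by rewrite expnSr exprM; ring.
apply: vgeD => //; apply: (@vgeW _ (1 + 1)) => //.
by apply: vge_subX11; solve_int11.
Qed.

Lemma unit11_of_mul a b : int11 a -> int11 b -> vge 1 (a * b - 1) ->
  a != 0 /\ vp a = 0.
Proof.
move=> ha hb h; have [ab0 vab] := vp_congr ltr01 h (oner_neq0 _) (vp_natr 1).
have a0 : a != 0 by apply: contra ab0 => /eqP->; rewrite mul0r.
have b0 : b != 0 by apply: contra ab0 => /eqP->; rewrite mulr0.
move: vab ha hb; rewrite vpM // /vge (negbTE a0) (negbTE b0) /=; lia.
Qed.

Lemma unit11_congr a b : vge 1 (a - b) -> b != 0 -> vp b = 0 -> a != 0 /\ vp a = 0.
Proof. exact: vp_congr ltr01. Qed.

Lemma int11_vp0 a : vp a = 0 -> int11 a.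
Proof. by move=> va; rewrite /vge va lexx orbT. Qed.

Lemma teichmuller_congr a b n m : (n <= m)%N -> int11 a -> int11 b ->
  vge 1 (b ^+ 11 - b) -> vge 1 (a - b) ->
  vge (1 + n%:Z) (a ^+ (11 ^ n) - b ^+ (11 ^ m)).
Proof.
move=> nm ha hb hf hab; rewrite -(subnK nm) expnD exprM.
apply: vge_subX11n => //; solve_int11.
set c := b ^+ _; have -> : a - c = (a - b) + (b - c) by ring.
apply: vgeD => //.
by rewrite -vgeN opprB; apply: fermat11n.
Qed.

Lemma teichmuller_root a n : a != 0 -> vp a = 0 -> vge 1 (a ^+ 11 - a) ->
  vge (1 + n%:Z) ((a ^+ (11 ^ n)) ^+ 10 - 1).
Proof.
move=> a0 va hf; have ha := int11_vp0 va; set w := a ^+ (11 ^ n).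
have [w0 vw] : w != 0 /\ vp w = 0 by apply: unit11_congr a0 va; exact: fermat11n.
have hw : vge (1 + n%:Z) ((w ^+ 10 - 1) * w).
  have -> : (w ^+ 10 - 1) * w = (a ^+ 11) ^+ (11 ^ n) - a ^+ (11 ^ n).
    by rewrite -exprM mulnC exprM -/w; ring.
  by rewrite /w; apply: vge_subX11n => //; solve_int11.
by have := vge_divr hw w0; rewrite vw subr0.
Qed.

Lemma teichmuller (a : padic) : cauchyz a ->
  eventually (fun n => [/\ a n != 0, vp (a n) = 0 & vge 1 (a n ^+ 11 - a n)]) ->
  exists w, is_cauchy w /\ peq (fun n => w n ^+ 10) (pconst 1) /\
    pdvd 1 (fun n => w n - a n).
Proof.
move=> hc hu; have [N hN] := eventually_and hu (cauchyz_eventually 1 hc).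
(* the Teichmueller representative is the limit of a_n^(11^n) *)
exists (fun n => a n ^+ (11 ^ n)); split; [|split].
- apply/is_cauchyE => k; exists (maxn N `|k|) => n m hn hm.
  have congr n' m' : (n' <= m')%N -> (maxn N `|k| <= n')%N ->
      vge k (a n' ^+ (11 ^ n') - a m' ^+ (11 ^ m')).
    move=> nm' hn'; have [[a0 va hf] hcn] := hN n' (leq_trans (leq_maxl _ _) hn').
    have [[_ vb hfb] _] := hN m' (leq_trans (leq_maxl _ _) (leq_trans hn' nm')).
    apply: vgeW (teichmuller_congr nm' _ _ hfb _); rewrite ?int11_vp0 //; first lia.
    by apply: hcn => //; lia.
  have [nm|mn] := leqP n m; first exact: congr.
  by rewrite -vgeN opprB; apply: congr (ltnW mn) _.
- move=> k; exists (maxn N k) => n hn; have [[a0 va hf] _] := hN n (leq_trans (leq_maxl _ _) hn).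
  by apply: vgeW (teichmuller_root n a0 va hf); lia.
- exists N => n /hN [[_ va hf] _]; exact: fermat11n (int11_vp0 va) hf.
Qed.

(** * The golden ratio modulo 11 *)

Section GoldenModEleven.

Variable a : rat.
Hypothesis a_int : int11 a.
Hypothesis a_golden : vge 1 (a ^+ 2 - a - 1).

Lemma golden_fermat : vge 1 (a ^+ 11 - a).
Proof.
have -> : a ^+ 11 - a = (a ^+ 2 - a - 1) *
  (a ^+ 9 + a ^+ 8 + 2%:R * a ^+ 7 + 3%:R * a ^+ 6 + 5%:R * a ^+ 5 + 8%:R * a ^+ 4
   + 13%:R * a ^+ 3 + 21%:R * a ^+ 2 + 34%:R * a + 55%:R) + 11 * (8%:R * a + 5%:R).
  by ring.
by apply: vgeD; [apply: vgeMr|apply: vge_mul11]; solve_int11.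
Qed.

Lemma golden_unit : a != 0 /\ vp a = 0.
Proof.
apply: (@unit11_of_mul a (a - 1)) => //; first by solve_int11.
by have -> : a * (a - 1) - 1 = a ^+ 2 - a - 1 by ring.
Qed.

Lemma golden_sqrt5_unit : 2 * a - 1 != 0 /\ vp (2 * a - 1) = 0.
Proof.
have [q0 qv] : (2 * a - 1) ^+ 2 != 0 /\ vp ((2 * a - 1) ^+ 2) = 0.
  apply: (@vp_congr 0 1 _ (5%:R)); rewrite ?vp_natr //.
  have -> : (2 * a - 1) ^+ 2 - 5%:R = 4%:R * (a ^+ 2 - a - 1) by ring.
  by apply: vgeMl; solve_int11.
have s0 : 2 * a - 1 != 0 by apply: contra q0 => /eqP->; rewrite expr0n.
by split=> //; move: qv; rewrite expr2 vpM //; lia.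
Qed.

Lemma golden_expn j : vge 1 (a ^+ j.+1 - (fib j.+1)%:R * a - (fib j)%:R).
Proof.
elim: j => [|j IH]; first by rewrite /= expr1 mul1r !subrr vge0.
have -> : a ^+ j.+2 - (fib j.+2)%:R * a - (fib j.+1)%:R =
    a * (a ^+ j.+1 - (fib j.+1)%:R * a - (fib j)%:R) + (fib j.+1)%:R * (a ^+ 2 - a - 1).
  by rewrite [fib j.+2]/= natrD exprS; ring.
by apply: vgeD; apply: vgeMl => //; solve_int11.
Qed.

Lemma golden_conj : vge 1 ((1 - a) ^+ 2 - (1 - a) - 1).
Proof. by have -> : (1 - a) ^+ 2 - (1 - a) - 1 = a ^+ 2 - a - 1 by ring. Qed.

End GoldenModEleven.

Lemma golden_binet a j : int11 a -> vge 1 (a ^+ 2 - a - 1) ->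
  vge 1 (a ^+ j - (1 - a) ^+ j - (fib j)%:R * (2 * a - 1)).
Proof.
move=> ha hg; case: j => [|j]; first by rewrite !expr0 subrr mul0r subrr vge0.
have := vgeB (golden_expn ha hg j)
  (@golden_expn (1 - a) ltac:(solve_int11) (golden_conj hg) j).
by congr (is_true (vge _ _)); ring.
Qed.

Definition lucas j := (if j is k.+1 then fib k.+1 + 2 * fib k else 2)%N.

Lemma golden_lucas a j : int11 a -> vge 1 (a ^+ 2 - a - 1) ->
  vge 1 (a ^+ j + (1 - a) ^+ j - (lucas j)%:R).
Proof.
move=> ha hg; case: j => [|j]; first by rewrite !expr0 subrr vge0.
have := vgeD (golden_expn ha hg j)
  (@golden_expn (1 - a) ltac:(solve_int11) (golden_conj hg) j).
by congr (is_true (vge _ _)); rewrite /lucas natrD natrM; ring.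
Qed.

(* a^10 - 1 = 11 (5 a + 3) modulo a^2 - a - 1, and 5 a + 3 is a unit *)
Lemma golden_pow10 a : int11 a -> vge 2 (a ^+ 2 - a - 1) ->
  a ^+ 10 - 1 != 0 /\ vp (a ^+ 10 - 1) = 1.
Proof.
move=> ha h2; have h1 : vge 1 (a ^+ 2 - a - 1) by apply: vgeW h2.
have [u0 uv] : 5%:R * a + 3%:R != 0 /\ vp (5%:R * a + 3%:R) = 0.
  apply: (@unit11_of_mul _ (5%:R * a - 8%:R)); try by solve_int11.
  have -> : (5%:R * a + 3%:R) * (5%:R * a - 8%:R) - 1 = 25%:R * (a ^+ 2 - a - 1) by ring.
  by apply: vgeMl; solve_int11.
have b0 : 11 * (5%:R * a + 3%:R) != 0 by rewrite mulf_neq0.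
apply: (@vp_congr 1 2 _ _ _ _ b0); rewrite ?vpM ?vp11 ?uv //.
have -> : a ^+ 10 - 1 - 11 * (5%:R * a + 3%:R) = (a ^+ 2 - a - 1) *
  (a ^+ 8 + a ^+ 7 + 2%:R * a ^+ 6 + 3%:R * a ^+ 5 + 5%:R * a ^+ 4
   + 8%:R * a ^+ 3 + 13%:R * a ^+ 2 + 21%:R * a + 34%:R) by ring.
by apply: vgeMr => //; solve_int11.
Qed.

Lemma vp_div_sub1 a w : w != 0 -> vp w = 0 -> vge 1 (w - a) -> vge 2 (w ^+ 10 - 1) ->
  a ^+ 10 - 1 != 0 -> vp (a ^+ 10 - 1) = 1 -> a / w - 1 != 0 /\ vp (a / w - 1) = 1.
Proof.
move=> w0 wv hwa hw10 P0 Pv; set D := a / w - 1.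
have D1 : vge 1 D.
  have -> : D = (a - w) * w^-1 by rewrite /D; field.
  apply: vgeMr; first by rewrite -vgeN opprB.
  by have := vgeV w; rewrite wv oppr0.
have [W0 Wv] : w ^+ 10 != 0 /\ vp (w ^+ 10) = 0.
  by apply: (@vp_congr 0 2 _ 1) hw10 (oner_neq0 _) _; rewrite ?vp_natr.
have [Q0 Qv] : a ^+ 10 - w ^+ 10 != 0 /\ vp (a ^+ 10 - w ^+ 10) = 1.
  apply: (@vp_congr 1 2 _ _ _ _ P0 Pv) => //.
  have -> : a ^+ 10 - w ^+ 10 - (a ^+ 10 - 1) = - (w ^+ 10 - 1) by ring.
  by rewrite vgeN.
set X := (D + 1) ^+ 10 - 1 ^+ 10.
have E : a ^+ 10 - w ^+ 10 = w ^+ 10 * X.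
  by rewrite /X /D subrK expr1n exprMn exprVn; field.
have X0 : X != 0 by apply: contra Q0 => /eqP X0; rewrite E X0 mulr0.
have Xv : vp X = 1 by move: Qv; rewrite E vpM // Wv add0r.
have nX : ~~ vge 2 X by rewrite /vge (negbTE X0) Xv.
apply: vp_eq_vge => //; apply: contra nX => D2.
have Di : int11 D by apply: vgeW D1.
by apply: (vge_subXX _ (vgeD Di (int11_natr 1)) (int11_natr 1)); rewrite addrK.
Qed.

Lemma lucas_unit i : (i <= 9)%N -> i <> 5%N ->
  (lucas i)%:R != 0 :> rat /\ vp (lucas i)%:R = 0.
Proof.
(* among L(0), ..., L(9) only L(5) = 11 is divisible by 11 *)
rewrite vp_natr pnatr_eq0.
case: i => [|[|[|[|[|[|[|[|[|[|j]]]]]]]]]] // _ h5; split=> //.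
all: first [reflexivity | by case: h5].
Qed.

(** * Power series and Newton iteration *)

Lemma logn11_le m : (0 < logn 11 m)%N -> (2 * logn 11 m + 2 <= m)%N.
Proof.
move=> l0; have m0 : (0 < m)%N by case: m l0.
have exp11_ge j : (0 < j)%N -> (2 * j + 2 <= 11 ^ j)%N.
  elim: j => [//|[//|j] IH] _.
  by have := IH isT; rewrite [(11 ^ j.+2)%N]expnS; lia.
apply: leq_trans (exp11_ge _ l0) _.
by apply: dvdn_leq => //; apply: pfactor_dvdnn.
Qed.

Lemma logn11_fact_le m : (10 * logn 11 m`! <= m)%N.
Proof.
rewrite logn_fact //.
suff H K : (10 * \sum_(1 <= k < K.+1) m %/ 11 ^ k + m %/ 11 ^ K <= m)%N.
  by apply: leq_trans (H m); apply: leq_addr.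
elim: K => [|K IH]; first by rewrite big_geq // divn1.
have : (11 * (m %/ 11 ^ K.+1) <= m %/ 11 ^ K)%N.
  by rewrite expnSr divnMA mulnC leq_divM.
rewrite big_nat_recr //=; lia.
Qed.

Lemma sub_logn_unbounded (k : int) :
  exists M, forall m, (M <= m)%N -> k <= m%:Z - (logn 11 m)%:Z.
Proof.
exists (2 * `|k| + 2)%N => m hm.
case: (posnP (logn 11 m)) => [->|l0]; first by lia.
have := logn11_le l0; lia.
Qed.

Lemma sub_logn_fact_unbounded (k : int) :
  exists M, forall m, (M <= m)%N -> k <= m%:Z - (logn 11 m`!)%:Z.
Proof. by exists (2 * `|k|)%N => m hm; have := logn11_fact_le m; lia. Qed.

Section PowerSeries.

Variable c : nat -> padic.
Hypothesis c_cauchy : forall m, cauchyz (c m).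
Hypothesis c_bound :
  eventually (fun n => forall m, vge (m%:Z - (logn 11 m`!)%:Z) (c m n)).

Definition pseries_partial (x : padic) (M : nat) : padic :=
  fun n => \sum_(m < M) c m n * x n ^+ m.

Let S x := plim (pseries_partial x).

Lemma pseries_tail x : inZ11 x ->
  eventually (fun n => forall m, vge (m%:Z - (logn 11 m`!)%:Z) (c m n * x n ^+ m)).
Proof.
move=> /inZ11_pdvdz hx; apply: eventually_mono (eventually_and c_bound hx).
by move=> n [hc hxn] m; apply: vgeMr (hc m) _; solve_int11.
Qed.

Lemma pseries_conv x : inZ11 x -> exists y, cauchyz y /\ pconv (pseries_partial x) y.
Proof.
move=> hx; apply: series_pconv (pseries_tail hx) sub_logn_fact_unbounded => m.
exact: cauchyzM (c_cauchy m) (cauchyzX m (inZ11_cauchyz hx)).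
Qed.

Lemma pseries_spec x : inZ11 x -> cauchyz (S x) /\ pconv (pseries_partial x) (S x).
Proof. by move=> hx; apply: plim_spec; apply: pseries_conv. Qed.

Lemma pseries_congr0 x : inZ11 x -> pdvdz 1 (fun n => S x n - c 0 n).
Proof.
move=> hx; have [_ hS] := pseries_spec hx; apply: pconv_pdvdz hS _.
have [N hN] := pseries_tail hx; exists 1%N => [[//|M] _]; exists N => n /hN hn.
rewrite /pseries_partial big_ord_recl expr0 mulr1 addrAC subrr add0r.
apply: vge_sum => j _; apply: vgeW (hn _); rewrite lift0.
by have := logn11_fact_le j.+1; lia.
Qed.

(* the terms of degree >= 2 of S x - S x' are divisible by (x - x') 11^2 *)
Lemma pseries_linear x x' (j : nat) : inZ11 x -> inZ11 x' ->
  pdvdz j%:Z (fun n => x n - x' n) ->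
  pdvdz j.+2%:Z (fun n => S x n - S x' n - c 1 n * (x n - x' n)).
Proof.
move=> hx hx' hj; have [_ hS] := pseries_spec hx; have [_ hS'] := pseries_spec hx'.
apply: pconv_pdvdz (pconvB hS hS') _.
have [N hN] := eventually_and c_bound (eventually_and (inZ11_pdvdz hx)
  (eventually_and (inZ11_pdvdz hx') hj)).
exists 2%N => [[//|[//|M]] _]; exists N => n /hN [hc [hxn [hxn' hjn]]].
rewrite /pseries_partial -sumrB !big_ord_recl /= !expr0 !expr1 subrr add0r.
rewrite -mulrBr addrAC subrr add0r; apply: vge_sum => k _; rewrite -mulrBr.
rewrite -[j.+2%:Z]/(2 + j%:Z); apply: vgeM; last exact: vge_subXX.
apply: vgeW (hc _); rewrite /bump /=; have := logn11_fact_le (1 + (1 + k)); lia.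
Qed.

End PowerSeries.

Section Newton.

Variables (S : padic -> padic) (c1 y : padic).
Hypothesis S_cauchy : forall x, inZ11 x -> cauchyz (S x).
Hypothesis c1_cauchy : cauchyz c1.
Hypothesis c1_val : eventually (fun n => c1 n != 0 /\ vp (c1 n) = 1).
Hypothesis S_linear : forall x x' (j : nat), inZ11 x -> inZ11 x' ->
  pdvdz j%:Z (fun n => x n - x' n) ->
  pdvdz j.+2%:Z (fun n => S x n - S x' n - c1 n * (x n - x' n)).
Hypothesis y_int : inZ11 y.
Hypothesis y_congr : pdvdz 1 (fun n => y n - S (pconst 0) n).

Definition newton_step (x : padic) : padic := fun n => (y n - S x n) / c1 n.

Fixpoint newton (k : nat) : padic :=
  if k is k'.+1 then fun n => newton k' n + newton_step (newton k') n
  else pconst 0.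

Lemma newton_step_pdvdz x (k : nat) : pdvdz k.+1%:Z (fun n => y n - S x n) ->
  pdvdz k%:Z (newton_step x).
Proof.
move=> h; apply: eventually_mono (eventually_and c1_val h) => n [[c0 cv] hn].
by apply: vgeW (vgeM hn (vgeV (c1 n))); rewrite cv; lia.
Qed.

Lemma newton_step_cauchyz x : inZ11 x -> cauchyz (newton_step x).
Proof.
move=> hx; apply: cauchyzM (cauchyzV c1_cauchy c1_val).
exact: cauchyzB (inZ11_cauchyz y_int) (S_cauchy hx).
Qed.

Lemma newton_spec k :
  inZ11 (newton k) /\ pdvdz k.+1%:Z (fun n => y n - S (newton k) n).
Proof.
elim: k => [|k [hX hF]]; first by split; [exact: inZ11_const0|].
have hq := newton_step_pdvdz hF; set X := newton k.
have hX' : inZ11 (newton k.+1).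
  split; first by apply/is_cauchyE; apply: cauchyzD (inZ11_cauchyz hX) (newton_step_cauchyz hX).
  by apply: pdvdzD (inZ11_pdvdz hX) (pdvdzW _ hq).
have hd : pdvdz k%:Z (fun n => newton k.+1 n - X n).
  by apply: pdvdz_eq hq; apply: eventuallyT => n /=; rewrite addrC addKr.
split=> //; apply: pdvdz_eq (pdvdzN (S_linear hX' hX hd)).
(* the step cancels the linear term, leaving the quadratic error of S_linear *)
apply: eventually_mono c1_val => n [c0 _].
by rewrite /= /newton_step -/X; field.
Qed.

Lemma newton_congr m m' : (m <= m')%N ->
  pdvdz m%:Z (fun n => newton m' n - newton m n).
Proof.
move=> mm'; rewrite -(subnK mm'); elim: (m' - m)%N => [|d IH].
  by apply: eventuallyT => n; rewrite subrr vge0.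
have [_ hF] := newton_spec (d + m).
have hq := pdvdz_leq (leq_addl d m) (newton_step_pdvdz hF).
by apply: pdvdz_eq (pdvdzD IH hq); apply: eventuallyT => n /=; ring.
Qed.

Lemma newton_pconv : exists x, cauchyz x /\ pconv newton x.
Proof.
apply: cauchy_pconv => [m|k]; first by have [/inZ11_cauchyz] := newton_spec m.
exists k => m m' hm hm'; have [mm'|m'm] := leqP m m'.
  apply: pdvdz_eq (pdvdzN (pdvdz_leq hm (newton_congr mm'))).
  by apply: eventuallyT => n; rewrite opprB.
exact: pdvdz_leq hm' (newton_congr (ltnW m'm)).
Qed.

Lemma newton_surj : exists x, inZ11 x /\ peq (S x) y.
Proof.
have [x [hxc hxl]] := newton_pconv.
have hx : inZ11 x.
  split; first exact/is_cauchyE.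
  have [M hM] := hxl 0%N; have [hXM _] := newton_spec M.
  apply: pdvdz_eq (pdvdzB (inZ11_pdvdz hXM) (hM M (leqnn _))).
  by apply: eventuallyT => n /=; ring.
exists x; split=> // k.
have hxk : pdvdz k%:Z (fun n => x n - newton k n).
  by apply: pconv_pdvdz hxl _; exists k => m; apply: newton_congr.
have [hXk hFk] := newton_spec k.
have hc1 : pdvdz 1 c1 by apply: eventually_mono c1_val => n [_ <-]; exact: vge_vp.
have h1 := pdvdz_leq (leq_trans (leqnSn k) (leqnSn _)) (S_linear hx hXk hxk).
have h2 := pdvdz_leq (leqnSn k) hFk.
have h3 : pdvdz k%:Z (fun n => c1 n * (x n - newton k n)).
  by apply: pdvdzW (pdvdzM hc1 hxk); lia.
by apply: pdvdz_eq (pdvdzB (pdvdzD h1 h3) h2); apply: eventuallyT => n; ring.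
Qed.
End Newton.

(** * The series F_i *)

Section Logarithm.

Variable u : padic.
Hypothesis u_cauchy : cauchyz u.
Hypothesis u_congr1 : pdvdz 1 (fun n => u n - 1).

Let log_term (m : nat) : padic := fun n => (-1) ^+ m.+1 * (u n - 1) ^+ m / m%:R.

Lemma log_term_bound m n : vge 1 (u n - 1) ->
  vge (m%:Z - (logn 11 m)%:Z) (log_term m n).
Proof.
move=> h; rewrite /log_term -mulrA; apply: vgeMl; first by solve_int11.
by have := vgeM (vgeX m h) (vgeV m%:R); rewrite mul1r vp_natr.
Qed.

Lemma log11_spec : cauchyz (log11 u) /\
  pconv (fun M n => \sum_(1 <= m < M.+1) log_term m n) (log11 u).
Proof.
apply: plim_spec; pose t m := if m is 0 then pconst 0 else log_term m.
have [y [hy hc]] : exists y, cauchyz y /\ pconv (fun M n => \sum_(m < M) t m n) y.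
  apply: (series_pconv (g := fun m => m%:Z - (logn 11 m)%:Z)) sub_logn_unbounded.
    case=> [|m]; first exact: cauchyz_const.
    apply: cauchyzM _ (cauchyz_const _); apply: cauchyzM (cauchyz_const _) _.
    exact: cauchyzX (cauchyzB u_cauchy (cauchyz_const 1)).
  by apply: eventually_mono u_congr1 => n h [|m]; [exact: vge0|exact: log_term_bound].
exists y; split=> //; apply: pconv_eq (pconvS hc) => M n.
by rewrite big_ord_recl big_add1 big_mkord add0r.
Qed.

Lemma log11_congr : pdvdz 2 (fun n => log11 u n - (u n - 1)).
Proof.
have [_ hc] := log11_spec; apply: pconv_pdvdz hc _.
exists 1%N => M hM; apply: eventually_mono u_congr1 => n h.
rewrite big_ltn // {1}/log_term expr1 expr2 mulN1r opprK mul1r divr1 addrC addKr.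
rewrite big_nat_cond; apply: vge_sum => m /andP[/andP[m2 _] _].
apply: vgeW (log_term_bound m h).
case: (posnP (logn 11 m)) => [->|l0]; first by lia.
by have := logn11_le l0; lia.
Qed.

End Logarithm.

Lemma omega11_spec x :
  (exists w, is_cauchy w /\ peq (fun n => w n ^+ 10) (pconst 1) /\
    pdvd 1 (fun n => w n - x n)) ->
  is_cauchy (omega11 x) /\ peq (fun n => omega11 x n ^+ 10) (pconst 1) /\
    pdvd 1 (fun n => omega11 x n - x n).
Proof. exact: epsilon_spec. Qed.

Lemma golden_omega (a : padic) : inZ11 a -> pdvdz 1 (fun n => a n ^+ 2 - a n - 1) ->
  is_cauchy (omega11 a) /\ peq (fun n => omega11 a n ^+ 10) (pconst 1) /\
    pdvd 1 (fun n => omega11 a n - a n).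
Proof.
move=> ha hg; apply: omega11_spec; apply: teichmuller; first exact: inZ11_cauchyz.
apply: eventually_mono (eventually_and (inZ11_pdvdz ha) hg) => n [an gn].
by have [a0 va] := golden_unit an gn; split=> //; apply: golden_fermat.
Qed.

Section GoldenSeries.

Variable phi : padic.
Hypothesis phi_int : inZ11 phi.
Hypothesis phi_golden : peq (fun n => phi n ^+ 2 - phi n - 1) (pconst 0).

Local Notation w := (omega11 phi).
Local Notation wb := (omega11 (fun n => 1 - phi n)).
Local Notation L := (log11 (fun n => phi n / w n)).

Lemma conj_int : inZ11 (fun n => 1 - phi n).
Proof.
split; first by apply/is_cauchyE; apply: cauchyzB (cauchyz_const 1) (inZ11_cauchyz phi_int).
have int_conj : pdvdz 0 (fun n => 1 - phi n).
  by apply: eventually_mono (inZ11_pdvdz phi_int) => n h; solve_int11.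
exact: int_conj.
Qed.

Lemma conj_golden : pdvdz 1 (fun n => (1 - phi n) ^+ 2 - (1 - phi n) - 1).
Proof.
apply: pdvdz_eq (peq0_pdvdz 1 phi_golden); apply: eventuallyT => n /=; ring.
Qed.

Record regular (n : nat) : Prop := Regular {
  reg_phi : int11 (phi n);
  reg_golden : vge 2 (phi n ^+ 2 - phi n - 1);
  reg_w0 : w n != 0;
  reg_wv : vp (w n) = 0;
  reg_w_phi : vge 1 (w n - phi n);
  reg_w10 : vge 2 (w n ^+ 10 - 1);
  reg_wb : int11 (wb n);
  reg_wb_conj : vge 1 (wb n - (1 - phi n));
  reg_sqrt5_0 : 2 * phi n - 1 != 0;
  reg_sqrt5_v : vp (2 * phi n - 1) = 0 }.

Lemma eventually_regular : eventually regular.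
Proof.
have [_ [w10 wphi]] := golden_omega phi_int (peq0_pdvdz 1 phi_golden).
have [_ [_ wbconj]] := golden_omega conj_int conj_golden.
have := eventually_and (eventually_and (inZ11_pdvdz phi_int) (peq0_pdvdz 2 phi_golden))
  (eventually_and (eventually_and (w10 2%N) wphi) wbconj).
apply: eventually_mono => n [[p_int p_gold] [[p_w10 p_wphi] p_wb]].
have p_gold1 : vge 1 (phi n ^+ 2 - phi n - 1) by apply: vgeW p_gold.
have [w0 wv] : w n != 0 /\ vp (w n) = 0.
  by have [p0 pv] := golden_unit p_int p_gold1; apply: unit11_congr p_wphi p0 pv.
have [s0 sv] := golden_sqrt5_unit p_int p_gold1.
have wb_int : int11 (wb n).
  by rewrite -(subrK (1 - phi n) (wb n)); apply: vgeD (vgeW _ p_wb) _; solve_int11.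
by constructor; rewrite ?subr0.
Qed.

Lemma log_arg_vp n : regular n -> phi n / w n - 1 != 0 /\ vp (phi n / w n - 1) = 1.
Proof.
case=> p_int p_gold w0 wv wphi w10 _ _ _ _.
have [P0 Pv] := golden_pow10 p_int p_gold.
by apply: vp_div_sub1.
Qed.

Lemma omega_cauchyz : cauchyz w.
Proof. by have [/is_cauchyE] := golden_omega phi_int (peq0_pdvdz 1 phi_golden). Qed.

Lemma omega_conj_cauchyz : cauchyz wb.
Proof. by have [/is_cauchyE] := golden_omega conj_int conj_golden. Qed.

Lemma log_arg_cauchyz : cauchyz (fun n => phi n / w n).
Proof.
apply: cauchyzM (inZ11_cauchyz phi_int) (cauchyzV omega_cauchyz _).
by apply: eventually_mono eventually_regular => n reg; split; [apply: reg_w0 reg|apply: reg_wv reg].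
Qed.

Lemma log_arg_congr1 : pdvdz 1 (fun n => phi n / w n - 1).
Proof. by apply: eventually_mono eventually_regular => n /log_arg_vp [_ <-]; exact: vge_vp. Qed.

Lemma log_cauchyz : cauchyz L.
Proof. by have [] := log11_spec log_arg_cauchyz log_arg_congr1. Qed.

Lemma eventually_vp_log : eventually (fun n => [/\ regular n, L n != 0 & vp (L n) = 1]).
Proof.
have := log11_congr log_arg_cauchyz log_arg_congr1.
move/(eventually_and eventually_regular); apply: eventually_mono.
move=> n [reg hL]; have [d0 dv] := log_arg_vp reg.
by have [] := @vp_congr 1 2 _ _ isT hL d0 dv.
Qed.

Variable i : nat.

Definition golden_coef (m : nat) : padic := fun n =>
  (w n ^+ i - (-1) ^+ m * wb n ^+ i) * L n ^+ m / ((m`!)%:R * (2 * phi n - 1)).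

Lemma golden_coef_bound : eventually (fun n =>
  forall m, vge (m%:Z - (logn 11 m`!)%:Z) (golden_coef m n)).
Proof.
apply: eventually_mono eventually_vp_log => n [reg L0 Lv] m.
have s0 := reg_sqrt5_0 reg; have f0 : (m`!)%:R != 0 :> rat by rewrite pnatr_eq0 -lt0n fact_gt0.
have hN : int11 (w n ^+ i - (-1) ^+ m * wb n ^+ i).
  have wi := int11_vp0 (reg_wv reg); have wbi := reg_wb reg; solve_int11.
have := vgeM (vgeMl hN (vgeX m (vge_vp (L n)))) (vgeV ((m`!)%:R * (2 * phi n - 1))).
by rewrite Lv mul1r vpM // (reg_sqrt5_v reg) addr0 vp_natr.
Qed.

Lemma golden_coef_cauchyz m : cauchyz (golden_coef m).
Proof.
have s_unit : eventually (fun n => (m`!)%:R * (2 * phi n - 1) != 0 /\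
    vp ((m`!)%:R * (2 * phi n - 1)) = (logn 11 m`!)%:Z).
  apply: eventually_mono eventually_regular => n reg.
  have f0 : (m`!)%:R != 0 :> rat by rewrite pnatr_eq0 -lt0n fact_gt0.
  rewrite mulf_neq0 ?(reg_sqrt5_0 reg) // vpM ?(reg_sqrt5_0 reg) //.
  by rewrite (reg_sqrt5_v reg) addr0 vp_natr.
apply: cauchyzM (cauchyzM _ (cauchyzX m log_cauchyz)) (cauchyzV _ s_unit).
  apply: cauchyzB; first exact: cauchyzX i omega_cauchyz.
  exact: cauchyzM (cauchyz_const _) (cauchyzX i omega_conj_cauchyz).
apply: cauchyzM (cauchyz_const _) (cauchyzB _ (cauchyz_const 1)).
exact: cauchyzM (cauchyz_const _) (inZ11_cauchyz phi_int).
Qed.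

Lemma golden_coef1_vp : (i <= 9)%N -> i <> 5%N ->
  eventually (fun n => golden_coef 1 n != 0 /\ vp (golden_coef 1 n) = 1).
Proof.
move=> hi9 hi5; apply: eventually_mono eventually_vp_log => n [reg L0 Lv].
have [l0 lv] := lucas_unit hi9 hi5; have s0 := reg_sqrt5_0 reg.
have wi := int11_vp0 (reg_wv reg); have wbi := reg_wb reg; have pi := reg_phi reg.
have pg : vge 1 (phi n ^+ 2 - phi n - 1) by apply: vgeW (reg_golden reg).
have [u0 uv] : w n ^+ i + wb n ^+ i != 0 /\ vp (w n ^+ i + wb n ^+ i) = 0.
  apply: (@vp_congr 0 1 _ _ isT _ l0 lv).
  have -> : w n ^+ i + wb n ^+ i - (lucas i)%:R = (w n ^+ i - phi n ^+ i) +
     (wb n ^+ i - (1 - phi n) ^+ i) + (phi n ^+ i + (1 - phi n) ^+ i - (lucas i)%:R) by ring.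
  apply: vgeD; last exact: golden_lucas.
  by apply: vgeD; apply: vge_subXX; solve_int11; [exact: reg_w_phi reg|exact: reg_wb_conj reg].
have -> : golden_coef 1 n = (w n ^+ i + wb n ^+ i) * L n * (2 * phi n - 1)^-1.
  by rewrite /golden_coef expr1 mulN1r opprK expr1 [1`!]/= mul1r.
split; first by rewrite !mulf_neq0 ?invr_eq0.
by rewrite !vpM ?mulf_neq0 ?invr_eq0 // vpV (reg_sqrt5_v reg) uv Lv.
Qed.

Lemma golden_coef0_congr :
  pdvdz 1 (fun n => golden_coef 0 n - (fib i %% 11)%N%:R).
Proof.
apply: eventually_mono eventually_regular => n reg.
have s0 := reg_sqrt5_0 reg; have pi := reg_phi reg.
have wi := int11_vp0 (reg_wv reg); have wbi := reg_wb reg.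
have pg : vge 1 (phi n ^+ 2 - phi n - 1) by apply: vgeW (reg_golden reg).
(* Binet: F(i) sqrt5 = phi^i - (1 - phi)^i, and w, wb agree with phi, 1 - phi mod 11 *)
have h1 : vge 1 ((golden_coef 0 n - (fib i)%:R) * (2 * phi n - 1)).
  have -> : (golden_coef 0 n - (fib i)%:R) * (2 * phi n - 1) =
      (w n ^+ i - phi n ^+ i) - (wb n ^+ i - (1 - phi n) ^+ i)
      + (phi n ^+ i - (1 - phi n) ^+ i - (fib i)%:R * (2 * phi n - 1)).
    by rewrite /golden_coef expr0 mul1r /= mul1r; field.
  apply: vgeD; last exact: golden_binet.
  by apply: vgeB; apply: vge_subXX; solve_int11; [exact: reg_w_phi reg|exact: reg_wb_conj reg].
have := vge_divr h1 s0; rewrite (reg_sqrt5_v reg) subr0 => h2.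
have -> : golden_coef 0 n - (fib i %% 11)%N%:R =
    (golden_coef 0 n - (fib i)%:R) + 11 * (fib i %/ 11)%N%:R.
  by rewrite {2}(divn_eq (fib i) 11) natrD natrM; ring.
by apply: vgeD h2 _; apply: vge_mul11; exact: int11_natr.
Qed.

End GoldenSeries.

Theorem lemma5p4 (i : nat) (phi : padic) :
  (i <= 9)%N -> i <> 5%N ->
  inZ11 phi -> peq (fun n => phi n ^+ 2 - phi n - 1) (pconst 0) ->
  let c := pconst ((fib i %% 11)%N%:R) in
  (forall x, inZ11 x -> exists y, is_cauchy y /\ pconv (Fi_partial i phi x) y) /\
  (forall x, inZ11 x -> inZ11 (Fi i phi x) /\ pdvd 1 (fun n => Fi i phi x n - c n)) /\
  (forall y, inZ11 y -> pdvd 1 (fun n => y n - c n) ->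
     exists x, inZ11 x /\ peq (Fi i phi x) y).
Proof.
move=> hi9 hi5 hphi hgold c.
have coef_cauchy := golden_coef_cauchyz hphi hgold i.
have coef_bound := golden_coef_bound hphi hgold i.
have Fi_cauchy x : inZ11 x -> cauchyz (Fi i phi x).
  by move=> hx; case: (pseries_spec coef_cauchy coef_bound hx).
have Fi_congr x : inZ11 x -> pdvdz 1 (fun n => Fi i phi x n - c n).
  move=> hx; have := pdvdzD (pseries_congr0 coef_cauchy coef_bound hx)
    (golden_coef0_congr hphi hgold i).
  by apply: pdvdz_eq; apply: eventuallyT => n /=; rewrite addrA subrK.
have c_int : pdvdz 0 c by apply: eventuallyT => n; exact: int11_natr.
split; [|split].
- move=> x hx; have [y [hy hc]] := pseries_conv coef_cauchy coef_bound hx.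
  by exists y; split; [apply/is_cauchyE|].
- move=> x hx; split; last exact: Fi_congr.
  split; first exact/is_cauchyE/Fi_cauchy.
  apply: pdvdz_eq (pdvdzD (pdvdz_leq (leq0n 1) (Fi_congr x hx)) c_int).
  by apply: eventuallyT => n /=; rewrite subrK.
- move=> y hy hyc; apply: (newton_surj (c1 := golden_coef phi i 1)) hy _.
  + exact: Fi_cauchy.
  + exact: coef_cauchy.
  + exact: golden_coef1_vp.
  + by move=> x x' j hx hx'; exact: (pseries_linear coef_cauchy coef_bound hx hx').
  + have := pdvdzB hyc (Fi_congr _ inZ11_const0).
    by apply: pdvdz_eq; apply: eventuallyT => n /=; ring.
Qed.
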